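(* Let $\hat{P}$ be an accelerated CFA (obtained from a CFA $P$ by adding, for looping traces $\pi_1,\dots,\pi_k$ of $P$ with heads $v_1,\dots,v_k$, non-branching loops at $v_j$ labelled by (possibly under-approximating) accelerators $\hat{\pi}_j$), and let $\mathcal{L}_R$ be its restriction language. Let $\rho_1$ be a trace accepted by $\hat{P}$ with $\rho_1\in\mathcal{L}_R$. Then there exists a trace $\rho_2$ accepted by $\hat{P}$ such that $\rho_1\preceq\rho_2$ and $\rho_1$ is not a sub-trace of $\rho_2$.
   Context: Programs are over a finite set of program variables; a state assigns a value to each variable. Statements are assignments $x:=e$, nondeterministic assignments $x:=*$, assumptions $[B]$, and $\mathsf{skip}$; each denotes a relation on states, and a trace (finite statement sequence) denotes the composition of its statements' relations in order (empty trace: identity); $[\![\pi]\!]^n$ is the $n$-fold composition. Different occurrences of statements are distinguishable (by program location). A CFA $P=\langle V,E,v_0\rangle$ has finite vertex set, statement-labelled edges, and initial vertex $v_0$; a trace of it is the label sequence of a path; it is looping with head $v$ if the path starts and ends at $v$, and accepted if the path starts at $v_0$. An accelerator for a looping trace $\pi$ is a statement sequence $\hat{\pi}$ with $[\![\hat{\pi}]\!]=\bigcup_{i\ge0}[\![\pi]\!]^i$; an under-approximating accelerator is a statement sequence $\hat{\pi}$ with a function $\beta$ from states to $\mathbb{N}_0$ such that $\langle\sigma,\sigma'\rangle\in[\![\hat{\pi}]\!]$ iff $\exists i\le\beta(\sigma)$ with $\langle\sigma,\sigma'\rangle\in[\![\pi]\!]^i$, where $i\le\beta(\sigma)$ and $\langle\sigma,\sigma'\rangle\in[\![\pi]\!]^i$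 imply $\beta(\sigma')\le\beta(\sigma)-i$. A trace $\rho$ is subsumed by $\rho'$, written $\rho\preceq\rho'$, if $[\![\rho]\!]\subseteq[\![\rho']\!]$. The restriction language $\mathcal{L}_R$ of $\hat{P}$ is the set of all traces that contain a contiguous sub-trace equal to $\pi$ or to $\hat{\pi}\cdot\hat{\pi}$ for some accelerator $\hat{\pi}$ of $\hat{P}$ (with corresponding looping trace $\pi$) satisfying $\pi\preceq\hat{\pi}$. *)

From mathcomp Require Import all_boot.
Set Implicit Arguments. Unset Strict Implicit. Unset Printing Implicit Defensive.

Section Programs.
Variables (Var : eqType) (Val : Type).

Definition state := Var -> Val.
Definition upd (s : state) (x : Var) (v : Val) : state :=
  fun y => if y == x then v else s y.

Inductive stmt :=
| Assign of Var & (state -> Val)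
| Havoc of Var
| Assume of (state -> Prop)
| Skip.

Definition relS := state -> state -> Prop.
Definition rcomp (r1 r2 : relS) : relS :=
  fun s s'' => exists s', r1 s s' /\ r2 s' s''.

Definition sem_stmt (st : stmt) : relS :=
  match st with
  | Assign x e => fun s s' => s' = upd s x (e s)
  | Havoc x => fun s s' => exists v, s' = upd s x v
  | Assume B => fun s s' => s' = s /\ B s
  | Skip => fun s s' => s' = s
  end.

Fixpoint sem (t : seq stmt) : relS :=
  match t with
  | [::] => fun s s' => s' = s
  | st :: t' => rcomp (sem_stmt st) (sem t')
  end.

Fixpoint sem_pow (t : seq stmt) (n : nat) : relS :=
  match n with
  | 0 => fun s s' => s' = s
  | n'.+1 => rcomp (sem t) (sem_pow t n')
  end.

Definition is_accelerator (pi pihat : seq stmt) : Prop :=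
  forall s s', sem pihat s s' <-> exists i, sem_pow pi i s s'.

Definition is_ua_accelerator (pi pihat : seq stmt) : Prop :=
  exists beta : state -> nat,
    (forall s s', sem pihat s s' <-> exists2 i, i <= beta s & sem_pow pi i s s') /\
    (forall s s' i, i <= beta s -> sem_pow pi i s s' -> beta s' <= beta s - i).

Definition subsumed (rho rho' : seq stmt) : Prop :=
  forall s s', sem rho s s' -> sem rho' s s'.

(** Control-flow automata: finite vertex set, statement-labelled edges
    (edges are objects, so occurrences are distinguishable), initial vertex. *)
Record cfa := CFA {
  vtx : finType;
  edg : finType;
  esrc : edg -> vtx;
  edst : edg -> vtx;
  elbl : edg -> stmt;
  vinit : vtx }.

(** A trace is identified with its edge sequence (path); its statement
    sequence is [labels]. *)
Definition labels (P : cfa) (p : seq (edg P)) : seq stmt := map (@elbl P) p.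

Fixpoint is_path (P : cfa) (v : vtx P) (p : seq (edg P)) : Prop :=
  match p with
  | [::] => True
  | e :: p' => esrc e = v /\ is_path (edst e) p'
  end.

Definition path_end (P : cfa) (v : vtx P) (p : seq (edg P)) : vtx P :=
  foldl (fun _ e => edst e) v p.

Definition looping (P : cfa) (v : vtx P) (p : seq (edg P)) : Prop :=
  is_path v p /\ path_end v p = v.

Definition accepted (P : cfa) (p : seq (edg P)) : Prop := is_path (vinit P) p.

Record accel_data (P : cfa) := AccelData {
  nacc : nat;
  ahead : 'I_nacc -> vtx P;
  aloop : 'I_nacc -> seq (edg P);
  ahat : 'I_nacc -> seq stmt }.

Section Accelerated.
Variables (P : cfa) (D : accel_data P).

(** New vertices/edges of the added loops: index (j, i), i < |pihat_j|. *)
Definition loopidx := {j : 'I_(nacc D) & 'I_(size (ahat j))}.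
Definition vhat : finType := (vtx P + loopidx)%type.
Definition ehat : finType := (edg P + loopidx)%type.

(** i-th vertex of the j-th added loop: vertex 0 and vertex |pihat_j| are
    the head v_j, the others are fresh. *)
Definition lnode (j : 'I_(nacc D)) (i : nat) : vhat :=
  if 0 < i then
    match (insub i : option 'I_(size (ahat j))) with
    | Some o => inr (Tagged (fun j => 'I_(size (ahat j))) o)
    | None => inl (ahead j)
    end
  else inl (ahead j).

Definition hsrc (e : ehat) : vhat :=
  match e with inl e => inl (esrc e) | inr t => lnode (tag t) (tagged t) end.
Definition hdst (e : ehat) : vhat :=
  match e with inl e => inl (edst e) | inr t => lnode (tag t) (tagged t).+1 end.
Definition hlbl (e : ehat) : stmt :=
  match e with inl e => elbl e | inr t => nth Skip (ahat (tag t)) (tagged t) end.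

Definition hat : cfa := @CFA vhat ehat hsrc hdst hlbl (inl (vinit P)).

Definition loop_edges (j : 'I_(nacc D)) : seq ehat :=
  [seq (inr (Tagged (fun j => 'I_(size (ahat j))) i) : ehat)
  | i <- enum 'I_(size (ahat j))].

Definition accel_wf : Prop :=
  forall j : 'I_(nacc D),
    aloop j <> [::] /\ ahat j <> [::] /\
    looping (ahead j) (aloop j) /\
    (is_accelerator (labels (aloop j)) (ahat j) \/
     is_ua_accelerator (labels (aloop j)) (ahat j)).

Definition contains (rho x : seq ehat) : Prop :=
  exists a b, rho = a ++ x ++ b.

Definition in_LR (rho : seq ehat) : Prop :=
  exists j : 'I_(nacc D),
    subsumed (labels (aloop j)) (ahat j) /\
    (contains rho (map inl (aloop j)) \/
     contains rho (loop_edges j ++ loop_edges j)).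

End Accelerated.
End Programs.

(** Both shapes of a restriction-language witness can be replaced by a single
    copy of the accelerator loop [pihat_j], which starts and ends at the same
    head [v_j]: an occurrence of [pi_j] because [pi_j] is subsumed by
    [pihat_j], and an occurrence of [pihat_j pihat_j] because the relation
    denoted by an (under-approximating) accelerator is transitively closed,
    i.e. [pihat_j pihat_j] is subsumed by [pihat_j].  The result is accepted
    and subsumes [rho1], and it is not a supersequence of [rho1] because it
    contains strictly fewer original edges, respectively fewer loop edges. *)

From mathcomp Require Import all_boot zify.
(* Imported last so that [looping] is not shadowed by [path.looping]. *)

Set Implicit Arguments.
Unset Strict Implicit.
Unset Printing Implicit Defensive.

Section Semantics.
Variables (Var : eqType) (Val : Type).
Implicit Types (x y a b pi pihat : seq (stmt Var Val)).

Lemma sem_cat x y s s'' :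
  sem (x ++ y) s s'' <-> exists s', sem x s s' /\ sem y s' s''.
Proof.
elim: x s => [|st x IH] s /=.
  by split=> [Hy | [s' [-> Hy]]]; first exists s.
split=> [[s1 [Hst /IH [s2 [Hx Hy]]]] | [s2 [[s1 [Hst Hx]] Hy]]].
  by exists s2; split => //; exists s1.
by exists s1; split => //; apply/IH; exists s2.
Qed.

Lemma subsumed_catm a x y b : subsumed x y -> subsumed (a ++ x ++ b) (a ++ y ++ b).
Proof.
move=> Hxy s s' /sem_cat [s1 [Ha /sem_cat [s2 [Hx Hb]]]].
by apply/sem_cat; exists s1; split => //; apply/sem_cat; exists s2; split => //; apply: Hxy.
Qed.

Lemma sem_powD pi i i' s1 s2 s3 :
  sem_pow pi i s1 s2 -> sem_pow pi i' s2 s3 -> sem_pow pi (i + i') s1 s3.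
Proof.
elim: i s1 => [|i IH] s1 /=; first by move=> ->.
by move=> [t [Ht Hpow]] H; exists t; split => //; apply: IH Hpow H.
Qed.

Lemma accelerator_cat_subsumed pi pihat :
  is_accelerator pi pihat -> subsumed (pihat ++ pihat) pihat.
Proof.
move=> Hacc s s' /sem_cat [s1 [/Hacc [i Hi] /Hacc [i' Hi']]].
by apply/Hacc; exists (i + i'); apply: sem_powD Hi Hi'.
Qed.

(** The bound [beta] decreases along [pi]^i, so the two bounded iteration
    counts add up to at most the bound at the start. *)
Lemma ua_accelerator_cat_subsumed pi pihat :
  is_ua_accelerator pi pihat -> subsumed (pihat ++ pihat) pihat.
Proof.
move=> [beta [Hacc Hdecr]] s s' /sem_cat [s1 [/Hacc [i Hi Hpow] /Hacc [i' Hi' Hpow']]].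
have := Hdecr _ _ _ Hi Hpow => Hbeta.
by apply/Hacc; exists (i + i'); [lia | apply: sem_powD Hpow Hpow'].
Qed.

End Semantics.

Section Paths.
Variables (Var : eqType) (Val : Type) (G : cfa Var Val).
Implicit Types (v w : vtx G) (a b x y : seq (edg G)).

Lemma is_path_cat v x y :
  is_path v (x ++ y) <-> is_path v x /\ is_path (path_end v x) y.
Proof.
elim: x v => [|e x IH] v /=; first by split => // [[]].
rewrite /path_end /= -/(path_end _ _).
by split=> [[-> /IH [Hx Hy]] | [[-> Hx] Hy]]; split => //; apply/IH.
Qed.

Lemma path_end_cat v x y : path_end v (x ++ y) = path_end (path_end v x) y.
Proof. by rewrite /path_end foldl_cat. Qed.

Lemma is_path_start_unique v w x : x <> [::] -> is_path v x -> is_path w x -> v = w.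
Proof. by case: x => //= e x _ [<- _] [<- _]. Qed.

Lemma looping_cat w x y : looping w x -> looping w y -> looping w (x ++ y).
Proof.
move=> [Hx Ex] [Hy Ey]; split; last by rewrite path_end_cat Ex.
by apply/is_path_cat; rewrite Ex.
Qed.

Lemma is_path_splice_loop v w a x y b :
  x <> [::] -> looping w x -> looping w y ->
  is_path v (a ++ x ++ b) -> is_path v (a ++ y ++ b).
Proof.
move=> Hx0 [Hx Ex] [Hy Ey] /is_path_cat [Ha /is_path_cat [Hax Hb]].
have Ea : path_end v a = w by apply: is_path_start_unique Hax Hx.
rewrite Ea Ex in Hb; apply/is_path_cat; split => //.
by apply/is_path_cat; rewrite Ea Ey.
Qed.

End Paths.

Lemma count_lt_not_subseq (T : eqType) (p : pred T) (a x y b : seq T) :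
  count p x < count p y -> ~~ subseq (a ++ y ++ b) (a ++ x ++ b).
Proof.
move=> Hlt; apply/negP => /(leq_count_subseq p).
by rewrite !count_cat leq_add2l leq_add2r leqNgt Hlt.
Qed.

Section Accelerated.
Variables (Var : eqType) (Val : Type) (P : cfa Var Val) (D : accel_data P).

Local Notation hpath := (@is_path _ _ (hat D)).
Local Notation hend := (@path_end _ _ (hat D)).
Local Notation hlooping := (@looping _ _ (hat D)).
Local Notation hlabels := (@labels _ _ (hat D)).

Lemma looping_inl v (p : seq (edg P)) :
  looping v p -> hlooping (inl v) (map inl p).
Proof.
have Hend w q : hend (inl w) (map inl q) = inl (path_end w q).
  by elim: q w => //= e q IH w; rewrite /path_end /= -!/(path_end _ _) IH.
move=> [Hp Ep]; split; last by rewrite Hend Ep.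
by elim: p v Hp {Ep} => //= e p IH v [<- Hp]; split => //; apply: IH.
Qed.

Lemma labels_inl (p : seq (edg P)) : hlabels (map inl p) = labels p.
Proof. by rewrite /labels -map_comp. Qed.

Variable j : 'I_(nacc D).
Local Notation n := (size (ahat j)).

Definition loop_edge (i : 'I_n) : ehat D := inr (Tagged (fun j => 'I_(size (ahat j))) i).

Lemma loop_edgesE : loop_edges j = map loop_edge (enum 'I_n).
Proof. by []. Qed.

Lemma loop_edges_chain (s : seq 'I_n) m :
  map val s = iota m (size s) ->
  hpath (lnode j m) (map loop_edge s) /\
  hend (lnode j m) (map loop_edge s) = lnode j (m + size s).
Proof.
elim: s m => [|i s IH] m /=; first by rewrite addn0.
move=> [Ei /IH [Hs Es]]; rewrite /path_end /= -/(path_end _ _) /= -Ei.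
by rewrite Ei -addSnnS.
Qed.

Lemma lnode_size : lnode j n = inl (ahead j).
Proof. by rewrite /lnode; case: ifP => // _; rewrite insubF ?ltnn. Qed.

Lemma looping_loop_edges : hlooping (inl (ahead j)) (loop_edges j).
Proof.
have Hiota : map val (enum 'I_n) = iota 0 (size (enum 'I_n)).
  by rewrite val_enum_ord size_enum_ord.
have [Hpath Hend] := loop_edges_chain Hiota.
by split; rewrite loop_edgesE //= Hend size_enum_ord lnode_size.
Qed.

Lemma labels_loop_edges : hlabels (loop_edges j) = ahat j.
Proof.
rewrite loop_edgesE /labels -map_comp.
have -> : @elbl _ _ (hat D) \o loop_edge = nth (@Skip Var Val) (ahat j) \o val by [].
by rewrite map_comp val_enum_ord -/(mkseq _ _) mkseq_nth.
Qed.

Lemma loop_edges_nonnil : ahat j <> [::] -> loop_edges j <> [::].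
Proof. by move=> Hhat E; apply: Hhat; rewrite -labels_loop_edges E. Qed.

Lemma accepted_splice_loop_edges a x b :
  x <> [::] -> hlooping (inl (ahead j)) x -> subsumed (hlabels x) (ahat j) ->
  @accepted _ _ (hat D) (a ++ x ++ b) ->
  @accepted _ _ (hat D) (a ++ loop_edges j ++ b) /\
  subsumed (hlabels (a ++ x ++ b)) (hlabels (a ++ loop_edges j ++ b)).
Proof.
move=> Hx0 Hx Hsub Hacc; split; first exact: is_path_splice_loop Hx0 Hx looping_loop_edges Hacc.
by rewrite /labels !map_cat -!/(labels _) labels_loop_edges; apply: subsumed_catm.
Qed.

End Accelerated.

Theorem lemma2 (Var : eqType) (Val : Type) (P : cfa Var Val)
    (D : accel_data P) (rho1 : seq (ehat D)) :
  accel_wf D ->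
  @accepted _ _ (hat D) rho1 ->
  in_LR rho1 ->
  exists rho2 : seq (ehat D),
    @accepted _ _ (hat D) rho2 /\
    subsumed (@labels _ _ (hat D) rho1) (@labels _ _ (hat D) rho2) /\
    ~~ subseq rho1 rho2.
Proof.
move=> Hwf Hacc [j [Hsub Hwitness]].
have [Hloop0 [Hhat0 [Hlooping Hacc_or_ua]]] := Hwf j.
have Hle0 := loop_edges_nonnil Hhat0.
case: Hwitness => [[a [b E]] | [a [b E]]]; rewrite {}E in Hacc *;
  exists (a ++ loop_edges j ++ b).
- have Hx0 : map (@inl _ (loopidx D)) (aloop j) <> [::] by case: (aloop j) Hloop0.
  have Hsubx : subsumed (@labels _ _ (hat D) (map inl (aloop j))) (ahat j).
    by rewrite labels_inl.
  have [Hacc' Hsub'] :=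
    accepted_splice_loop_edges Hx0 (looping_inl D Hlooping) Hsubx Hacc.
  do !split => //.
  apply: (@count_lt_not_subseq (ehat D) (fun e => if e is inl _ then true else false)).
  rewrite loop_edgesE !count_map (@eq_count _ _ pred0) ?count_pred0 //.
  by case: (aloop j) Hloop0.
- have Hx0 : loop_edges j ++ loop_edges j <> [::] by case: (loop_edges j) Hle0.
  have Hlooping2 := looping_cat (looping_loop_edges j) (looping_loop_edges j).
  have Hsubx : subsumed (@labels _ _ (hat D) (loop_edges j ++ loop_edges j)) (ahat j).
    rewrite /labels map_cat -/(labels _) labels_loop_edges.
    by case: Hacc_or_ua => [/accelerator_cat_subsumed | /ua_accelerator_cat_subsumed].
  have [Hacc' Hsub'] := accepted_splice_loop_edges Hx0 Hlooping2 Hsubx Hacc.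
  do !split => //.
  apply: (@count_lt_not_subseq (ehat D) (fun e => if e is inr _ then true else false)).
  have Hsize : 0 < size (ahat j) by case: (ahat j) Hhat0.
  rewrite count_cat loop_edgesE count_map (@eq_count _ _ predT) ?count_predT //.
  by rewrite size_enum_ord; lia.
Qed.
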